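(* Let $f,g:\mathbb{R}^n\to\mathbb{R}$ satisfy assumptions (A1)–(A4) below, let $\zeta\in[0,1)$ be fixed and $x_0\in\Omega=\{x:g(x)\le0\}$. Then the constraint function $g$ decreases along the trajectory $x(t;\zeta,x_0)$ outside the neighborhood $\Theta_\zeta$, and increases along it inside $\Theta_\zeta$, where $\Theta_\zeta=\{x:\cos\theta(x)<-\zeta,\ x\in\Omega_{f(x_0)}\}$.
   Context: Assumptions: (A1) $\lim_{|x|\to\infty} f(x)=+\infty$; (A2) $\nabla f(x)\neq 0$ for all $x\in\Omega$; (A3) $\nabla g(x)\neq 0$ for all $x\in\Omega$; (A4) $f,g$ twice continuously differentiable. $\cos\theta(x)=\frac{\langle\nabla f(x),\nabla g(x)\rangle}{|\nabla f(x)||\nabla g(x)|}$; $\Omega_{f(x_0)}=\{x: f(x)\le f(x_0),\ g(x)\le 0\}$. For $\zeta\in[0,1)$, $\mathbf{s}_\zeta(x)=-\frac{\nabla f(x)}{|\nabla f(x)|}-\zeta\frac{\nabla g(x)}{|\nabla g(x)|}$, and $x(t;\zeta,x_0)$ is the solution of $\frac{dx}{dt}=\mathbf{s}_\zeta(x)$, $x(0)=x_0$, on its maximal interval of existence in $E=\{x:\nabla f(x)\ne0,\nabla g(x)\ne0\}$. *)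

From HB Require Import structures.
From mathcomp Require Import all_boot all_order all_algebra.
From mathcomp Require Import all_classical all_reals all_analysis.
Set Implicit Arguments. Unset Strict Implicit. Unset Printing Implicit Defensive.
Import Order.TTheory GRing.Theory Num.Theory.
Import numFieldNormedType.Exports.
Local Open Scope classical_set_scope.
Local Open Scope ring_scope.

Section Defs.
Variables (R : realType) (n : nat).
Implicit Types (f g : 'rV[R]_n -> R) (u v x : 'rV[R]_n).

Definition dotp u v : R := \sum_(i < n) u 0 i * v 0 i.
Definition enorm u : R := Num.sqrt (dotp u u).

Definition partial f (i : 'I_n) x : R := 'D_(delta_mx 0 i) f x.

Definition grad f x : 'rV[R]_n := \row_i partial f i x.

Definition C2 f : Prop :=
  (forall x, differentiable f x) /\
  (forall i x, differentiable (partial f i) x) /\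
  (forall i j, continuous (partial (partial f i) j)).

(* (A1): lim_{|x| -> oo} f(x) = +oo *)
Definition coercive f : Prop :=
  forall M : R, exists r : R, forall x, r < enorm x -> M < f x.

Definition Omega g : set 'rV[R]_n := [set x | g x <= 0].

Definition Omega_lev f g (c : R) : set 'rV[R]_n := [set x | f x <= c /\ g x <= 0].

Definition cos_theta f g x : R :=
  dotp (grad f x) (grad g x) / (enorm (grad f x) * enorm (grad g x)).

Definition Eset f g : set 'rV[R]_n := [set x | grad f x != 0 /\ grad g x != 0].

Definition s_field f g (zeta : R) x : 'rV[R]_n :=
  - ((enorm (grad f x))^-1 *: grad f x) - zeta *: ((enorm (grad g x))^-1 *: grad g x).

Definition Theta f g (zeta : R) x0 : set 'rV[R]_n :=
  [set x | cos_theta f g x < - zeta /\ Omega_lev f g (f x0) x].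

Definition is_solution f g (zeta : R) x0 (I : set R) (x : R -> 'rV[R]_n) : Prop :=
  (exists a b : \bar R, (a < 0%:E)%E /\ (0%:E < b)%E /\
     I = [set t : R | (a < t%:E)%E /\ (t%:E < b)%E]) /\
  x 0 = x0 /\
  (forall t, I t -> Eset f g (x t) /\ is_derive t 1 x (s_field f g zeta (x t))).

Definition is_maximal_solution f g (zeta : R) x0 (I : set R) (x : R -> 'rV[R]_n) : Prop :=
  is_solution f g zeta x0 I x /\
  (forall (J : set R) (y : R -> 'rV[R]_n), is_solution f g zeta x0 J y ->
     I `<=` J -> (forall t, I t -> y t = x t) -> J `<=` I).

End Defs.

From HB Require Import structures.
From mathcomp Require Import all_boot all_order all_algebra.
From mathcomp Require Import all_classical all_reals all_analysis.
From mathcomp Require Import ring.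
Set Implicit Arguments. Unset Strict Implicit. Unset Printing Implicit Defensive.
Import Order.TTheory GRing.Theory Num.Theory.
Import numFieldNormedType.Exports.
Local Open Scope classical_set_scope.
Local Open Scope ring_scope.

(* By the chain rule, (g o x)'(t) = <s_zeta(x t), grad g (x t)>, and expanding
   s_zeta gives |grad g| (- cos theta - zeta).  The trajectory stays in E, so
   grad g does not vanish along it and the derivative has the sign of
   - cos theta - zeta, positive exactly when cos theta < - zeta. *)

Section InnerProduct.
Variables (R : realType) (n : nat).
Implicit Types (u v w : 'rV[R]_n) (a : R).

Lemma dotpBl u v w : dotp (u - v) w = dotp u w - dotp v w.
Proof.
by rewrite /dotp -sumrB; apply: eq_bigr => i _; rewrite !mxE mulrBl.
Qed.

Lemma dotpNl u v : dotp (- u) v = - dotp u v.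
Proof. by rewrite /dotp -sumrN; apply: eq_bigr => i _; rewrite !mxE mulNr. Qed.

Lemma dotpZl a u v : dotp (a *: u) v = a * dotp u v.
Proof.
by rewrite /dotp mulr_sumr; apply: eq_bigr => i _; rewrite !mxE mulrA.
Qed.

Lemma dotp_ge0 u : 0 <= dotp u u.
Proof. by apply: sumr_ge0 => i _; rewrite -expr2 sqr_ge0. Qed.

Lemma dotp_gt0 u : u != 0 -> 0 < dotp u u.
Proof.
move=> u0; rewrite lt_def dotp_ge0 andbT; apply: contra u0 => /eqP uu0.
have /psumr_eq0P ui0 := uu0.
apply/eqP/rowP => i; rewrite mxE; apply/eqP; rewrite -sqrf_eq0 expr2.
by apply/eqP/ui0 => // j _; rewrite -expr2 sqr_ge0.
Qed.

Lemma dotp_enorm u : dotp u u = enorm u ^+ 2.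
Proof. by rewrite sqr_sqrtr // dotp_ge0. Qed.

Lemma enorm_gt0 u : u != 0 -> 0 < enorm u.
Proof. by move=> u0; rewrite sqrtr_gt0 dotp_gt0. Qed.

End InnerProduct.

Section Gradient.
Variables (R : realType) (n : nat).
Implicit Types (f g : 'rV[R]_n -> R) (y v : 'rV[R]_n).

Lemma diff_grad g y v : differentiable g y -> 'd g y v = dotp v (grad g y).
Proof.
move=> dg; rewrite {1}(row_sum_delta v) linear_sum.
by apply: eq_bigr => i _; rewrite linearZ /= mxE /partial deriveE.
Qed.

Lemma derive1_comp_grad g (x : R -> 'rV[R]_n) t :
  derivable x t 1 -> differentiable g (x t) ->
  'D_1 (g \o x) t = dotp ('D_1 x t) (grad g (x t)).
Proof.
move=> /derivable1_diffP dx dg.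
rewrite deriveE; last exact: differentiable_comp.
by rewrite diff_comp //= -(deriveE (1 : R) dx) diff_grad.
Qed.

Lemma dotp_s_field_grad f g zeta y :
  grad f y != 0 -> grad g y != 0 ->
  dotp (s_field f g zeta y) (grad g y) =
    enorm (grad g y) * (- cos_theta f g y - zeta).
Proof.
move=> /enorm_gt0 nf /enorm_gt0 ng.
rewrite /s_field /cos_theta dotpBl dotpNl !dotpZl dotp_enorm.
by field; rewrite !gt_eqF.
Qed.

End Gradient.

Section Trajectory.
Variables (R : realType) (n : nat) (f g : 'rV[R]_n -> R) (zeta : R).
Variables (x0 : 'rV[R]_n) (I : set R) (x : R -> 'rV[R]_n).
Hypotheses (dg : forall y, differentiable g y)
           (sol : is_solution f g zeta x0 I x).

Lemma derivable_comp_solution t : I t -> derivable (g \o x) t 1.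
Proof.
move=> It; have [_ xD] := sol.2.2 t It.
have dx : derivable x t 1 := ex_derive.
by apply/derivable1_diffP/differentiable_comp => //; apply/derivable1_diffP.
Qed.

Lemma derive_comp_solution t : I t ->
  'D_1 (g \o x) t = enorm (grad g (x t)) * (- cos_theta f g (x t) - zeta).
Proof.
move=> It; have [[nf ng] xD] := sol.2.2 t It.
rewrite derive1_comp_grad ?ex_derive // derive_val.
exact: dotp_s_field_grad.
Qed.

End Trajectory.

Theorem lemma5p6 (R : realType) (n : nat) (f g : 'rV[R]_n -> R)
  (zeta : R) (x0 : 'rV[R]_n) (I : set R) (x : R -> 'rV[R]_n) :
  coercive f ->
  (forall y, Omega g y -> grad f y != 0) ->
  (forall y, Omega g y -> grad g y != 0) ->
  C2 f -> C2 g ->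
  0 <= zeta -> zeta < 1 ->
  Omega g x0 ->
  is_maximal_solution f g zeta x0 I x ->
  forall t, I t ->
    derivable (g \o x) t 1 /\
    (Theta f g zeta x0 (x t) -> 0 < 'D_1 (g \o x) t) /\
    (Omega_lev f g (f x0) (x t) -> ~ Theta f g zeta x0 (x t) ->
       'D_1 (g \o x) t <= 0).
Proof.
move=> _ _ _ _ [dg _] _ _ _ [sol _] t It.
have ng : 0 < enorm (grad g (x t)) by apply/enorm_gt0; case: (sol.2.2 t It) => -[].
have Dgx := derive_comp_solution dg sol It.
split; first exact: (derivable_comp_solution dg sol It).
split=> [[cos_lt _] | xO notTheta]; rewrite Dgx.
  by rewrite mulr_gt0 // subr_gt0 ltrNr.
rewrite pmulr_rle0 // subr_le0 lerNl leNgt; apply/negP => cos_lt.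
exact: notTheta (conj cos_lt xO).
Qed.
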